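(* Let $\mathcal{X}$ be an input space, let $\mathcal{H}$ be a class of hypotheses $h:\mathcal{X}\to\{0,1\}$ with VC-dimension $d$, let $M\ge 1$, let $\mathcal{S}_1,\dots,\mathcal{S}_M$ (source domains) and $\mathcal{T}$ (target domain) be domains on $\mathcal{X}$, and let $n$ be a positive integer divisible by $M$. For each $j\in\{1,\dots,M\}$ draw a labeled sample of $n/M$ points i.i.d. from $\mathcal{S}_j$ (labels given by $f_{\mathcal{S}_j}$), and draw an unlabeled sample of $n$ points i.i.d. from $\mathcal{T}$; for each $\alpha\in\Delta$ the empirical divergence $\widehat d_{\mathcal{H}\Delta\mathcal{H}}(\mathcal{S}_\alpha,\mathcal{T})$ is computed from this target sample together with an unlabeled sample of $n$ points drawn i.i.d. from $\mathcal{S}_\alpha$. Let $\delta\in(0,1)$. Then for any $h\in\mathcal{H}$ and any $\alpha\in\Delta$, with probability at least $1-\delta$ over the choice of samples, $$\varepsilon_{\mathcal{T}}(h)\le \sum_{j=1}^M \alpha_j\,\widehat{\varepsilon}_{\mathcal{S}_j}(h)+\tfrac12\,\widehat d_{\mathcal{H}\Delta\mathcal{H}}(\mathcal{S}_\alpha,\mathcal{T})+\lambda_\alpha+B_\alpha(\delta)+V(\delta),$$ where $$B_\alpha(\delta)=2\sqrt{\frac{M\left(2d\log(2(n+1))+\log(8/\delta)\right)}{n}\sum_{j=1}^M\alpha_j^2},\qquad \lambda_\alpha=\min_{h'\in\mathcal{H}}\Big(\sum_{j=1}^M\alpha_j\varepsilon_{\mathcal{S}_j}(h')+\varepsilon_{\mathcal{T}}(h')\Big),$$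 $$V(\delta)=2\sqrt{\frac{2d\log(2n)+\log(4/\delta)}{n}}.$$
   Context: Binary deterministic setting: a domain $\mathcal{D}$ is a probability distribution on $\mathcal{X}$ together with a labeling function $f_{\mathcal{D}}:\mathcal{X}\to\{0,1\}$ (the label of $x$ is $f_{\mathcal{D}}(x)$). The risk of $h$ on $\mathcal{D}$ is $\varepsilon_{\mathcal{D}}(h)=\Pr_{x\sim\mathcal{D}}(h(x)\ne f_{\mathcal{D}}(x))$, and $\widehat{\varepsilon}_{\mathcal{S}_j}(h)$ is the empirical risk (fraction of misclassified points) of $h$ on the labeled sample from $\mathcal{S}_j$. $\Delta=\{\alpha\in\mathbb{R}^M:\alpha_j\ge0,\ \sum_j\alpha_j=1\}$ is the probability simplex, and $\mathcal{S}_\alpha=\sum_{j=1}^M\alpha_j\mathcal{S}_j$ is the mixture distribution, whose risk satisfies $\varepsilon_{\mathcal{S}_\alpha}(h)=\sum_j\alpha_j\varepsilon_{\mathcal{S}_j}(h)$. The symmetric difference class is $\mathcal{H}\Delta\mathcal{H}=\{x\mapsto h(x)\oplus h'(x): h,h'\in\mathcal{H}\}$ ($\oplus$ = exclusive or). For a class $\mathcal{G}$ of $\{0,1\}$-valued functions, the $\mathcal{G}$-divergence between distributions $\mathcal{D},\mathcal{D}'$ is $d_{\mathcal{G}}(\mathcal{D},\mathcal{D}')=2\sup_{g\in\mathcal{G}}|\Pr_{\mathcal{D}}(g(x)=1)-\Pr_{\mathcal{D}'}(g(x)=1)|$; its empirical version $\widehat d_{\mathcal{G}}(\mathcal{D},\mathcal{D}')$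 is obtained by replacing both probabilities with empirical frequencies on unlabeled samples of size $n$ from $\mathcal{D}$ and $\mathcal{D}'$. *)

From HB Require Import structures.
From mathcomp Require Import all_boot all_order all_algebra.
From mathcomp Require Import all_classical all_reals all_analysis.
Set Implicit Arguments. Unset Strict Implicit. Unset Printing Implicit Defensive.
Import Order.TTheory GRing.Theory Num.Theory.
Local Open Scope classical_set_scope.
Local Open Scope ring_scope.

Definition shatters (X : Type) (H : set (X -> bool)) (s : seq X) : Prop :=
  forall B : X -> bool, exists h, H h /\ forall k, (k < size s)%N ->
    forall x0, h (nth x0 s k) = B (nth x0 s k).

Definition distinct (X : Type) (s : seq X) : Prop :=
  forall x0 k l, (k < size s)%N -> (l < size s)%N -> nth x0 s k = nth x0 s l -> k = l.

Definition VCdim (X : Type) (H : set (X -> bool)) (d : nat) : Prop :=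
  (exists s : seq X, distinct s /\ size s = d /\ shatters H s) /\
  (forall s : seq X, distinct s -> shatters H s -> (size s <= d)%N).

Definition symdiff_class (X : Type) (H : set (X -> bool)) : set (X -> bool) :=
  [set g | exists h h', H h /\ H h' /\ g = (fun x => xorb (h x) (h' x))].

Section Risks.
Context {R : realType} {dX : measure_display} {X : measurableType dX}.

Definition risk (D : probability X R) (f : X -> bool) (h : X -> bool) : R :=
  fine (D [set x | h x != f x]).

Definition emp_risk (k : nat) (xs : 'I_k -> X) (f : X -> bool) (h : X -> bool) : R :=
  (\sum_(i < k) (h (xs i) != f (xs i))%:R) / k%:R.

Definition emp_freq (k : nat) (xs : 'I_k -> X) (g : X -> bool) : R :=
  (\sum_(i < k) (g (xs i))%:R) / k%:R.

Definition emp_div (G : set (X -> bool)) (k : nat) (xs ys : 'I_k -> X) : R :=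
  2 * sup [set `|emp_freq xs g - emp_freq ys g| | g in G].

Definition mixture (M : nat) (alpha : 'I_M -> R) (S : 'I_M -> probability X R)
  (A : set X) : \bar R := (\sum_(j < M) (alpha j)%:E * S j A)%E.

End Risks.

Definition simplex {R : realType} (M : nat) (alpha : 'I_M -> R) : Prop :=
  (forall j, 0 <= alpha j) /\ \sum_(j < M) alpha j = 1.

Definition mutually_independent {R : realType} {dO dX : measure_display}
  {O : measurableType dO} {X : measurableType dX}
  (P : probability O R) (I : finType) (Z : I -> O -> X) : Prop :=
  forall A : I -> set X, (forall i, measurable (A i)) ->
    P (\big[setI/setT]_(i : I) (Z i @^-1` A i)) =
    (\prod_(i : I) fine (P (Z i @^-1` A i)))%:E.

(* the whole sample: labeled source points (j,i), target points, S_alpha points *)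
Definition all_samples {O : Type} {X : Type} (M m n : nat)
  (Xs : 'I_M -> 'I_m -> O -> X) (Xt Xa : 'I_n -> O -> X) :
  ('I_M * 'I_m + ('I_n + 'I_n))%type -> O -> X :=
  fun k => match k with
           | inl p => Xs p.1 p.2
           | inr (inl i) => Xt i
           | inr (inr i) => Xa i
           end.

From HB Require Import structures.
From mathcomp Require Import all_boot all_order all_algebra.
From mathcomp Require Import all_classical all_reals all_analysis.
From mathcomp Require Import lra zify ring.
Import Order.TTheory GRing.Theory Num.Theory.
Local Open Scope classical_set_scope.
Local Open Scope ring_scope.

(* Pick a comparator h' in H whose joint risk sum_j alpha_j eps_Sj(h') + eps_T(h')
   is within a margin of its infimum lambda, and let g = h xor h' (an element
   of H Delta H).  Deterministically (risk_transfer),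
     eps_T(h) <= sum_j alpha_j eps_Sj(h) + joint risk of h' + (T(g) - S_alpha(g)).
   The random part is handled by Hoeffding's inequality: the indicators
   "source point misclassified by h" and "target/mixture point in g" are
   independent Bernoulli variables, so the weighted source-risk gap and the
   gap between empirical and true frequencies of g are centred weighted sums
   with sub-Gaussian tails.  The empirical divergence
   dominates the frequency gap of g, and the term V absorbs both the slack
   of the divergence gap and the margin left for h'.  Because h and alpha
   are fixed, no uniform convergence over H is needed: the VC-dimension
   terms of B and V only enlarge the bound. *)

(* (2j)! absorbs a factor 2^j more than j!; this compares the even terms
   of the series of cosh x with those of exp (x^2/2). *)
Lemma expn2_fact_le_fact_double j : (2 ^ j * j`! <= (j.*2)`!)%N.
Proof.
elim: j => [//|j IH].
rewrite doubleS !factS expnS.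
move: IH; move: (2 ^ j)%N (j`!) ((j.*2)`!) => a b c IH.
rewrite -!muln2; nia.
Qed.

(* Centred Bernoulli variables are sub-Gaussian: E exp (s (b - p)) is at
   most exp (s^2/2), a weaker constant than Hoeffding's s^2/8 that is
   enough for the bound. *)
Section SubGaussian.
Variable R : realType.

(* cosh x <= exp (x^2/2), compared termwise on the exponential series. *)
Lemma cosh_le_expR_sqr (x : R) : expR x + expR (- x) <= 2 * expR (x ^+ 2 / 2).
Proof.
pose a k := exp_coeff x k + exp_coeff (- x) k.
have aE k : a k = (x ^+ k + (- x) ^+ k) / k`!%:R by rewrite /a /exp_coeff /= mulrDl.
have a_even j : a (j.*2) = 2 * (x ^+ (j.*2) / (j.*2)`!%:R).
  by rewrite aE -mul2n !exprM sqrrN -exprM mulrDl -mulr2n mulr_natl mul2n.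
have a_odd j : a (j.*2.+1) = 0.
  by rewrite aE exprS [(- x) ^+ _]exprS -mul2n !exprM sqrrN mulNr addrN mul0r.
have a_ge0 k : 0 <= a k.
  rewrite -[k]odd_double_half; case: (odd k) => /=; first by rewrite add1n a_odd.
  by rewrite add0n a_even mulr_ge0 // divr_ge0 // -mul2n exprM exprn_ge0 // sqr_ge0.
have sum_even N : \sum_(0 <= k < N.*2) a k = \sum_(0 <= j < N) a (j.*2).
  elim: N => [|N IH]; first by rewrite !big_geq.
  by rewrite doubleS !big_nat_recr //= IH a_odd addr0.
have partial_le N :
    \sum_(0 <= k < N) a k <= 2 * \sum_(0 <= j < N) exp_coeff (x ^+ 2 / 2) j.
  apply: (@le_trans _ _ (\sum_(0 <= k < N.*2) a k)).
    rewrite [leRHS](big_cat_nat (n := N)) //=; last by rewrite -addnn leq_addr.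
    by rewrite lerDl sumr_ge0.
  rewrite sum_even mulr_sumr; apply: ler_sum => j _.
  rewrite a_even ler_pM2l // /exp_coeff /= expr_div_n -exprM -mul2n -mulrA -invfM.
  apply: ler_wpM2l; first by rewrite exprM exprn_ge0 // sqr_ge0.
  rewrite lef_pV2 ?posrE ?mulr_gt0 ?exprn_gt0 ?ltr0n ?fact_gt0 //.
  by rewrite -natrX -natrM ler_nat mul2n; exact: expn2_fact_le_fact_double.
have cvg_lhs : (fun N => \sum_(0 <= k < N) a k) @ \oo --> expR x + expR (- x).
  rewrite (_ : (fun N => _) = series (exp_coeff x) \+ series (exp_coeff (- x))).
    by apply: cvgD; exact: is_cvg_series_exp_coeff.
  by apply/funext => N; rewrite /series /= big_split.
have cvg_rhs : (series (exp_coeff (x ^+ 2 / 2)) \+ series (exp_coeff (x ^+ 2 / 2)))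
    @ \oo --> expR (x ^+ 2 / 2) + expR (x ^+ 2 / 2).
  by apply: cvgD; exact: is_cvg_series_exp_coeff.
rewrite mulr_natl mulr2n; apply: (ler_cvg_to cvg_lhs cvg_rhs).
apply: nearW => N /=; rewrite -mulr2n; have := partial_le N; by rewrite mulr_natl.
Qed.

Lemma expR_le_chord (s z : R) : -1 <= z <= 1 ->
  expR (s * z) <= (1 + z) / 2 * expR s + (1 - z) / 2 * expR (- s).
Proof.
move=> /andP[z_ge z_le].
have tangent u : expR (s * z) * (1 + (u - s * z)) <= expR u.
  have -> : expR u = expR (u - s * z) * expR (s * z) by rewrite -expRD subrK.
  by rewrite mulrC ler_wpM2r ?expR_ge0 ?expR_ge1Dx.
have -> : expR (s * z) = (1 + z) / 2 * (expR (s * z) * (1 + (s - s * z))) +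
                         (1 - z) / 2 * (expR (s * z) * (1 + (- s - s * z))) by field.
by apply: lerD; apply: ler_wpM2l; rewrite ?tangent // divr_ge0 //; lra.
Qed.

(* moment generating function of a centred Bernoulli(p) variable b:
   E[exp (s (b - p))] <= exp (s^2/2), by convexity and cosh_le_expR_sqr *)
Lemma bernoulli_mgf_le (p s : R) : 0 <= p <= 1 ->
  p * expR (s * (1 - p)) + (1 - p) * expR (- (s * p)) <= expR (s ^+ 2 / 2).
Proof.
move=> /andP[p_ge0 p_le1].
apply: (@le_trans _ _ (p * ((1 + (1 - p)) / 2 * expR s + (1 - (1 - p)) / 2 * expR (- s))
   + (1 - p) * ((1 + - p) / 2 * expR s + (1 - - p) / 2 * expR (- s)))).
  apply: lerD; apply: ler_wpM2l; rewrite ?subr_ge0 //.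
    by apply: expR_le_chord; lra.
  by rewrite -mulrN; apply: expR_le_chord; lra.
have := cosh_le_expR_sqr s; set e := expR s; set e' := expR (- s) => cosh_le.
have -> : p * ((1 + (1 - p)) / 2 * e + (1 - (1 - p)) / 2 * e') +
    (1 - p) * ((1 + - p) / 2 * e + (1 - - p) / 2 * e') = (e + e') / 2 by field.
lra.
Qed.

End SubGaussian.

(* Given independent
   random variables Z_i and measurable events A_i, the hit pattern
   (1[Z_i in A_i])_i takes finitely many values; every event expressed
   through the pattern is a finite disjoint union of "cells", whose
   probabilities factor by independence. *)
Section IndependentIndicators.
Context {R : realType} {dO dX : measure_display} {O : measurableType dO}
  {X : measurableType dX} (P : probability O R) (I : finType)
  (Z : I -> O -> X) (A : I -> set X).
Hypothesis measurable_Z : forall i, measurable_fun setT (Z i).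
Hypothesis measurable_A : forall i, measurable (A i).
Hypothesis independent_Z : mutually_independent P Z.

Definition hit i w : bool := `[< A i (Z i w) >].
Definition hit_pattern w : {ffun I -> bool} := [ffun i => hit i w].
Definition hit_prob i : R := fine (P (Z i @^-1` A i)).

Definition cell_side (b : {ffun I -> bool}) i : set X := if b i then A i else ~` A i.
Definition cell (b : {ffun I -> bool}) : set O :=
  \big[setI/setT]_(i : I) (Z i @^-1` cell_side b i).
Definition pattern_prob (b : {ffun I -> bool}) : R :=
  \prod_i (if b i then hit_prob i else 1 - hit_prob i).

Definition deviation (c : I -> R) w : R := \sum_i c i * ((hit i w)%:R - hit_prob i).

Lemma measurable_preimage i B : measurable B -> measurable (Z i @^-1` B).
Proof. by move=> mB; rewrite -[_ @^-1` _]setTI; exact: measurable_Z. Qed.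

Lemma measurable_cell_side b i : measurable (cell_side b i).
Proof. by rewrite /cell_side; case: (b i) => //; exact: measurableC. Qed.

Lemma measurable_cell b : measurable (cell b).
Proof.
by apply: bigsetI_measurable => i _; apply: measurable_preimage; exact: measurable_cell_side.
Qed.

Lemma hit_prob_ge0 i : 0 <= hit_prob i.
Proof. exact: fine_ge0. Qed.

Lemma hit_prob_le1 i : hit_prob i <= 1.
Proof.
have mZA : measurable (Z i @^-1` A i) by exact: measurable_preimage.
by rewrite /hit_prob -lee_fin fineK ?fin_num_measure ?probability_le1.
Qed.

Lemma pattern_prob_ge0 b : 0 <= pattern_prob b.
Proof.
apply: prodr_ge0 => i _; case: (b i); first exact: hit_prob_ge0.
by rewrite subr_ge0 hit_prob_le1.
Qed.

Lemma P_cell b : P (cell b) = (pattern_prob b)%:E.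
Proof.
rewrite /cell independent_Z; last exact: measurable_cell_side.
congr (_%:E); apply: eq_bigr => i _; rewrite /cell_side; case: (b i) => //.
have mZA : measurable (Z i @^-1` A i) by exact: measurable_preimage.
by rewrite -preimage_setC probability_setC // fineB ?fin_num_measure.
Qed.

Lemma in_cell b w : cell b w <-> b = hit_pattern w.
Proof.
rewrite /cell -bigcap_seq; split.
  move=> in_all; apply/ffunP => i; rewrite ffunE /hit.
  have := in_all i (mem_index_enum i); rewrite /cell_side /preimage /=.
  by case: (b i) => Ai; apply/esym; [apply/asboolT|apply/asboolF].
move=> -> i _; rewrite /cell_side ffunE /hit /preimage /=.
by case: asboolP.
Qed.

Lemma in_cells (r : seq {ffun I -> bool}) (Q : pred {ffun I -> bool}) w :
  (\big[setU/set0]_(b <- r | Q b) cell b) w <-> (hit_pattern w \in r) && Q (hit_pattern w).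
Proof.
elim: r => [|a r IH]; first by rewrite big_nil.
rewrite big_cons in_cons; have [pat_a|ne] := eqVneq (hit_pattern w) a.
  rewrite pat_a in IH *; case: ifP => Qa /=.
    by split => // _; left; exact/in_cell.
  by split => // /IH; rewrite Qa andbF.
case: ifP => _ /=; last exact: IH.
split => [[/in_cell ea|/IH //]|/IH]; last by right.
by move: ne; rewrite ea eqxx.
Qed.

Lemma pattern_event_cells (Q : pred {ffun I -> bool}) :
  [set w | Q (hit_pattern w)] = \big[setU/set0]_(b | Q b) cell b.
Proof. by apply/seteqP; split => w /=; rewrite in_cells mem_index_enum. Qed.

Lemma measurable_pattern_event (Q : pred {ffun I -> bool}) :
  measurable [set w | Q (hit_pattern w)].
Proof.
by rewrite pattern_event_cells; apply: bigsetU_measurable => b _; exact: measurable_cell.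
Qed.

Lemma P_pattern_event (Q : pred {ffun I -> bool}) :
  P [set w | Q (hit_pattern w)] = (\sum_(b | Q b) pattern_prob b)%:E.
Proof.
rewrite pattern_event_cells; have := index_enum_uniq {ffun I -> bool}.
elim: (index_enum _) => [|a r IH]; first by rewrite !big_nil measure0.
rewrite /= => /andP[a_notin_r uniq_r]; rewrite !big_cons; case: ifP => Qa; last exact: IH.
rewrite measureU.
- by rewrite EFinD -IH // -P_cell.
- exact: measurable_cell.
- by apply: bigsetU_measurable => b _; exact: measurable_cell.
apply/seteqP; split => // w [/in_cell a_pat /in_cells /andP[pat_in_r _]].
by move: a_notin_r; rewrite a_pat pat_in_r.
Qed.

Definition pattern_deviation (c : I -> R) (b : {ffun I -> bool}) : R :=
  \sum_i c i * ((b i)%:R - hit_prob i).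

Lemma deviation_event (c : I -> R) (t : R) :
  [set w | t <= deviation c w] =
  [set w | (fun b => t <= pattern_deviation c b) (hit_pattern w)].
Proof.
have pattern_eq w : deviation c w = pattern_deviation c (hit_pattern w).
  by apply: eq_bigr => i _; rewrite ffunE.
by apply/seteqP; split => w /=; rewrite pattern_eq.
Qed.

Lemma measurable_deviation_event (c : I -> R) (t : R) :
  measurable [set w | t <= deviation c w].
Proof.
rewrite deviation_event.
exact: (measurable_pattern_event (fun b => t <= pattern_deviation c b)).
Qed.

(* exponential Markov inequality, with the moment generating function
   factored over the independent coordinates *)
Lemma deviation_tail_mgf (c : I -> R) (t s : R) : 0 <= s ->
  (P [set w | (t <= deviation c w)%R] <=
   (expR (- (s * t) + s ^+ 2 / 2 * \sum_i c i ^+ 2))%:E)%E.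
Proof.
move=> s_ge0.
set D := pattern_deviation c.
rewrite deviation_event (P_pattern_event (fun b => t <= D b)) lee_fin.
have markov : \sum_(b | t <= D b) pattern_prob b <=
    \sum_b pattern_prob b * expR (s * (D b - t)).
  rewrite [leRHS](bigID (fun b => t <= D b)) /= -[leLHS]addr0.
  apply: lerD; last by apply: sumr_ge0 => b _; rewrite mulr_ge0 ?expR_ge0 ?pattern_prob_ge0.
  apply: ler_sum => b tD; rewrite -[leLHS]mulr1 ler_wpM2l ?pattern_prob_ge0 //.
  by rewrite -expR0 ler_expR mulr_ge0 // subr_ge0.
apply: (le_trans markov).
pose f i (bb : bool) := (if bb then hit_prob i else 1 - hit_prob i) *
                        expR (s * c i * (bb%:R - hit_prob i)).
have factor b : pattern_prob b * expR (s * (D b - t)) = expR (- (s * t)) * \prod_i f i (b i).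
  rewrite big_split /= -expR_sum mulrCA -expRD; congr (_ * expR _).
  rewrite /D mulrBr mulr_sumr addrC; congr (_ + _).
  by apply: eq_bigr => i _; rewrite mulrA.
under eq_bigr do rewrite factor.
rewrite -mulr_sumr -(bigA_distr_bigA f) expRD ler_wpM2l ?expR_ge0 //.
rewrite mulr_sumr expR_sum; apply: ler_prod => i _; apply/andP; split.
  by rewrite sumr_ge0 // => bb _; rewrite mulr_ge0 ?expR_ge0 //;
    case: bb; rewrite ?hit_prob_ge0 // subr_ge0 hit_prob_le1.
rewrite big_bool /f /= mulr1n mulr0n sub0r mulrN.
rewrite (_ : s ^+ 2 / 2 * c i ^+ 2 = (s * c i) ^+ 2 / 2); last by ring.
by apply: bernoulli_mgf_le; rewrite hit_prob_ge0 hit_prob_le1.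
Qed.

(* Hoeffding's inequality: optimise the previous bound at s = t / sum c_i^2 *)
Lemma deviation_tail (c : I -> R) (t : R) : 0 < t -> 0 < \sum_i c i ^+ 2 ->
  (P [set w | (t <= deviation c w)%R] <= (expR (- (t ^+ 2 / (2 * \sum_i c i ^+ 2))))%:E)%E.
Proof.
move=> t_gt0 C_gt0; set C := \sum_i c i ^+ 2.
have := @deviation_tail_mgf c t (t / C) (divr_ge0 (ltW t_gt0) (ltW C_gt0)).
by congr (_ <= (expR _)%:E)%E; rewrite -/C; field; rewrite gt_eqF.
Qed.

End IndependentIndicators.

Lemma inf_near_attained {R : realType} {T : Type} {A : set T} {F : T -> R} {a : T}
    {eta : R} :
  A a -> (forall x, A x -> 0 <= F x) -> 0 < eta ->
  exists2 x, A x & F x < inf (F @` A) + eta.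
Proof.
move=> Aa F_ge0 eta_gt0.
have has_inf_FA : has_inf (F @` A).
  by split; [exists (F a), a | exists 0 => _ [x Ax <-]; exact: F_ge0].
by have [_ [x Ax <-] close] := inf_adherent eta_gt0 has_inf_FA; exists x.
Qed.

Section RiskFacts.
Context {R : realType} {dX : measure_display} {X : measurableType dX}.

Lemma measurable_neq (a b : X -> bool) :
  measurable [set x | a x] -> measurable [set x | b x] -> measurable [set x | a x != b x].
Proof.
move=> ma mb.
have -> : [set x | a x != b x] =
    ([set x | a x] `&` ~` [set x | b x]) `|` (~` [set x | a x] `&` [set x | b x]).
  apply/seteqP; split => x /=; case: (a x); case: (b x) => //=.
  - by move=> _; left.
  - by move=> _; right.
  - by case=> -[].
  - by case=> -[].
by apply: measurableU; apply: measurableI => //; exact: measurableC.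
Qed.

Definition disagreement (h h' : X -> bool) : X -> bool := fun x => xorb (h x) (h' x).

Lemma measurable_disagreement {h h' : X -> bool} :
  measurable [set x | h x] -> measurable [set x | h' x] ->
  measurable [set x | disagreement h h' x].
Proof.
move=> mh mh'; have -> : [set x | disagreement h h' x] = [set x | h x != h' x].
  by apply/seteqP; split => x /=; rewrite /disagreement; case: (h x); case: (h' x).
exact: measurable_neq.
Qed.

Lemma disagreement_symdiff {H : set (X -> bool)} {h h' : X -> bool} :
  H h -> H h' -> symdiff_class H (disagreement h h').
Proof. by move=> Hh Hh'; exists h, h'. Qed.

Lemma risk_ge0 (D : probability X R) (f h : X -> bool) : 0 <= risk D f h.
Proof. exact: fine_ge0. Qed.

Lemma fine_measure_le_add (D : probability X R) (U V W : set X) :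
  measurable U -> measurable V -> measurable W -> U `<=` V `|` W ->
  fine (D U) <= fine (D V) + fine (D W).
Proof.
move=> mU mV mW UVW.
rewrite -lee_fin EFinD !fineK ?fin_num_measure //.
apply: le_trans (measureU2 D mV mW).
by apply: le_measure; rewrite ?inE //; exact: measurableU.
Qed.

Lemma mixtureE (M : nat) (alpha : 'I_M -> R) (S : 'I_M -> probability X R) (G : set X) :
  measurable G -> mixture alpha S G = (\sum_j alpha j * fine (S j G))%:E.
Proof.
move=> mG; rewrite /mixture -sumEFin; apply: eq_bigr => j _.
by rewrite EFinM fineK ?fin_num_measure.
Qed.

(* The triangle inequality for the disagreement g = h xor h' (Ben-David et
   al.): the target risk of h is controlled by its source risks, the joint
   risk of the comparator h', and the gap between the target and mixture
   probabilities of g. *)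
Lemma risk_transfer {M : nat} (alpha : 'I_M -> R) (S : 'I_M -> probability X R)
    (fS : 'I_M -> X -> bool) (T : probability X R) (fT : X -> bool) (h h' : X -> bool) :
  (forall j, 0 <= alpha j) ->
  measurable [set x | h x] -> measurable [set x | h' x] ->
  (forall j, measurable [set x | fS j x]) -> measurable [set x | fT x] ->
  risk T fT h <= \sum_j alpha j * risk (S j) (fS j) h +
    (\sum_j alpha j * risk (S j) (fS j) h' + risk T fT h') +
    (fine (T [set x | disagreement h h' x]) -
     fine (mixture alpha S [set x | disagreement h h' x])).
Proof.
move=> alpha_ge0 mh mh' mfS mfT; set g := disagreement h h'.
have mg : measurable [set x | g x] by exact: measurable_disagreement.
have target : risk T fT h <= risk T fT h' + fine (T [set x | g x]).
  rewrite addrC; apply: fine_measure_le_add => //; try exact: measurable_neq.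
  by move=> x /=; rewrite /g /disagreement; case: (h x); case: (h' x); case: (fT x); auto.
have mixture_le : fine (mixture alpha S [set x | g x]) <=
    \sum_j alpha j * risk (S j) (fS j) h + \sum_j alpha j * risk (S j) (fS j) h'.
  rewrite mixtureE //= -big_split /=; apply: ler_sum => j _.
  rewrite -mulrDr ler_wpM2l //; apply: fine_measure_le_add => //; try exact: measurable_neq.
  by move=> x /=; rewrite /g /disagreement; case: (h x); case: (h' x); case: (fS j x); auto.
lra.
Qed.

Lemma emp_freq_ge0_le1 {k : nat} (xs : 'I_k -> X) (g : X -> bool) : (0 < k)%N ->
  0 <= emp_freq (R := R) xs g <= 1.
Proof.
move=> k_gt0; rewrite /emp_freq divr_ge0 ?sumr_ge0 //=.
rewrite ler_pdivrMr ?ltr0n // mul1r.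
apply: (@le_trans _ _ (\sum_(i < k) (1 : R))); last by rewrite sumr_const card_ord.
by apply: ler_sum => i _; case: (g (xs i)).
Qed.

Lemma emp_freq_gap_le_div {G : set (X -> bool)} {k : nat} (xs ys : 'I_k -> X)
    {g : X -> bool} : (0 < k)%N -> G g ->
  `|emp_freq xs g - emp_freq ys g| <= 1 / 2 * emp_div (R := R) G xs ys.
Proof.
move=> k_gt0 Gg; rewrite /emp_div mulrA div1r mulVf ?pnatr_eq0 // mul1r.
apply: ub_le_sup; last by exists g.
exists 1 => _ [g' _ <-].
have := emp_freq_ge0_le1 xs g' k_gt0.
have := emp_freq_ge0_le1 ys g' k_gt0.
move=> /andP[? ?] /andP[? ?]; rewrite ler_norml; apply/andP; split; lra.
Qed.

End RiskFacts.

Lemma prob_avoid_both {R : realType} {d : measure_display} {O : measurableType d}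
    (P : probability O R) (A B : set O) (a b : R) :
  measurable A -> measurable B -> (P A <= a%:E)%E -> (P B <= b%:E)%E ->
  ((1 - (a + b))%:E <= P (~` (A `|` B)))%E.
Proof.
move=> mA mB PA PB; have mAB := measurableU _ _ mA mB.
rewrite probability_setC // -(fineK (fin_num_measure P _ mAB)) -EFinB lee_fin lerD2l lerN2.
by rewrite -lee_fin fineK ?fin_num_measure // (le_trans (measureU2 P mA mB)) // EFinD leeD.
Qed.

Section SampleConcentration.
Context {R : realType} {dX dO : measure_display} {X : measurableType dX}
  {O : measurableType dO} (P : probability O R) (M n : nat)
  (S : 'I_M -> probability X R) (fS : 'I_M -> X -> bool) (T : probability X R)
  (alpha : 'I_M -> R) (Xs : 'I_M -> 'I_(n %/ M) -> O -> X) (Xt Xa : 'I_n -> O -> X).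
Local Notation m := (n %/ M)%N.
Hypothesis m_gt0 : (0 < m)%N.
Hypothesis n_gt0 : (0 < n)%N.
Hypothesis measurable_samples : forall k, measurable_fun setT (all_samples Xs Xt Xa k).
Hypothesis independent_samples : mutually_independent P (all_samples Xs Xt Xa).
Hypothesis law_Xs : forall j i A, measurable A -> P (Xs j i @^-1` A) = S j A.
Hypothesis law_Xt : forall i A, measurable A -> P (Xt i @^-1` A) = T A.
Hypothesis law_Xa : forall i A, measurable A -> P (Xa i @^-1` A) = mixture alpha S A.

Variables h g : X -> bool.
Hypothesis measurable_err : forall j, measurable [set x | h x != fS j x].
Hypothesis measurable_g : measurable [set x | g x].

Local Notation Idx := ('I_M * 'I_m + ('I_n + 'I_n))%type.
Local Notation Z := (all_samples Xs Xt Xa).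

Definition sample_event (k : Idx) : set X :=
  if k is inl p then [set x | h x != fS p.1 x] else [set x | g x].

Lemma measurable_sample_event k : measurable (sample_event k).
Proof. by case: k => [p|k]; [exact: measurable_err | exact: measurable_g]. Qed.

Definition source_weight (k : Idx) : R := if k is inl p then - (alpha p.1 / m%:R) else 0.
Definition divergence_weight (k : Idx) : R :=
  match k with inl _ => 0 | inr (inl _) => - n%:R^-1 | inr (inr _) => n%:R^-1 end.

Definition source_gap (w : O) : R :=
  \sum_j alpha j * risk (S j) (fS j) h -
  \sum_j alpha j * emp_risk (fun i => Xs j i w) (fS j) h.

Definition divergence_gap (w : O) : R :=
  (emp_freq (fun i => Xa i w) g - fine (mixture alpha S [set x | g x])) -
  (emp_freq (fun i => Xt i w) g - fine (T [set x | g x])).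

Lemma source_gap_deviation w :
  source_gap w = deviation P Idx Z sample_event source_weight w.
Proof.
rewrite /deviation big_sumType /= [X in _ + X]big1 ?addr0; last by move=> k _; rewrite mul0r.
pose F j (i : 'I_m) := - (alpha j / m%:R) *
  ((h (Xs j i w) != fS j (Xs j i w))%:R - risk (S j) (fS j) h).
rewrite (eq_bigr (fun p => F p.1 p.2)); last first.
  by move=> [j i] _; rewrite /hit /hit_prob /= asboolb law_Xs.
rewrite -pair_bigA /source_gap -sumrB; apply: eq_bigr => j _; rewrite /F /emp_risk.
rewrite -mulr_sumr sumrB sumr_const card_ord.
by field; rewrite pnatr_eq0 -lt0n.
Qed.

Lemma divergence_gap_deviation w :
  divergence_gap w = deviation P Idx Z sample_event divergence_weight w.
Proof.
rewrite /deviation big_sumType /= [X in X + _]big1 ?add0r; last by move=> k _; rewrite mul0r.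
set pt := fine (T [set x | g x]); set pa := fine (mixture alpha S [set x | g x]).
rewrite big_sumType /=.
rewrite (eq_bigr (fun i => - n%:R^-1 * ((g (Xt i w))%:R - pt))); last first.
  by move=> i _; rewrite /hit /hit_prob /= asboolb law_Xt.
rewrite [X in _ + X](eq_bigr (fun i => n%:R^-1 * ((g (Xa i w))%:R - pa))); last first.
  by move=> i _; rewrite /hit /hit_prob /= asboolb law_Xa.
rewrite /divergence_gap /emp_freq -!mulr_sumr !sumrB !sumr_const !card_ord /pt /pa.
by field; rewrite pnatr_eq0 -lt0n.
Qed.

Lemma source_weight_sqr :
  \sum_k source_weight k ^+ 2 = (\sum_j alpha j ^+ 2) / m%:R.
Proof.
rewrite big_sumType /= [X in _ + X]big1 ?addr0; last by move=> k _; rewrite expr0n.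
rewrite -(pair_bigA _ (fun j (i : 'I_m) => source_weight (inl (j, i)) ^+ 2)) /= mulr_suml.
apply: eq_bigr => j _; rewrite sumr_const card_ord sqrrN.
by field; rewrite pnatr_eq0 -lt0n.
Qed.

Lemma divergence_weight_sqr : \sum_k divergence_weight k ^+ 2 = 2 / n%:R.
Proof.
rewrite big_sumType /= [X in X + _]big1 ?add0r; last by move=> k _; rewrite expr0n.
rewrite (eq_bigr (fun _ => n%:R^-1 ^+ 2)); last by case=> k _; rewrite ?sqrrN.
rewrite sumr_const card_sum !card_ord.
by field; rewrite pnatr_eq0 -lt0n.
Qed.

Lemma measurable_gap_events (t : R) :
  measurable [set w | t <= source_gap w] /\ measurable [set w | t <= divergence_gap w].
Proof.
split.
- under eq_set do rewrite source_gap_deviation.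
  exact: measurable_deviation_event measurable_samples measurable_sample_event _ _.
- under eq_set do rewrite divergence_gap_deviation.
  exact: measurable_deviation_event measurable_samples measurable_sample_event _ _.
Qed.

Lemma source_gap_tail (t : R) : 0 < t -> 0 < \sum_j alpha j ^+ 2 ->
  (P [set w | (t <= source_gap w)%R] <=
   (expR (- (t ^+ 2 / (2 * ((\sum_j alpha j ^+ 2) / m%:R)))))%:E)%E.
Proof.
move=> t_gt0 alpha_gt0; under eq_set do rewrite source_gap_deviation.
rewrite -source_weight_sqr.
apply: deviation_tail measurable_samples measurable_sample_event independent_samples _ _ t_gt0 _.
by rewrite source_weight_sqr divr_gt0 // ltr0n.
Qed.

Lemma divergence_gap_tail (t : R) : 0 < t ->
  (P [set w | (t <= divergence_gap w)%R] <= (expR (- (t ^+ 2 / (2 * (2 / n%:R)))))%:E)%E.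
Proof.
move=> t_gt0; under eq_set do rewrite divergence_gap_deviation.
rewrite -divergence_weight_sqr.
apply: deviation_tail measurable_samples measurable_sample_event independent_samples _ _ t_gt0 _.
by rewrite divergence_weight_sqr divr_gt0 // ltr0n.
Qed.

Lemma small_gaps_event (t_src t_div : R) : 0 < t_src -> 0 < t_div ->
  0 < \sum_j alpha j ^+ 2 ->
  exists E : set O, [/\ measurable E,
    ((1 - (expR (- (t_src ^+ 2 / (2 * ((\sum_j alpha j ^+ 2) / m%:R)))) +
           expR (- (t_div ^+ 2 / (2 * (2 / n%:R))))))%:E <= P E)%E &
    forall w, E w -> source_gap w < t_src /\ divergence_gap w < t_div].
Proof.
move=> t_src_gt0 t_div_gt0 alpha_gt0.
have [m_src _] := measurable_gap_events t_src.
have [_ m_div] := measurable_gap_events t_div.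
exists (~` ([set w | t_src <= source_gap w] `|` [set w | t_div <= divergence_gap w])).
split; first exact/measurableC/measurableU.
- by apply: prob_avoid_both; [| |exact: source_gap_tail|exact: divergence_gap_tail].
- by move=> w /not_orP[/negP src /negP div]; rewrite !ltNge src div.
Qed.

End SampleConcentration.

Section ConfidenceTerms.
Context {R : realType}.

Lemma sum_sqr_gt0_of_sum1 {M : nat} {alpha : 'I_M -> R} :
  \sum_j alpha j = 1 -> 0 < \sum_j alpha j ^+ 2.
Proof.
move=> alpha_sum; rewrite lt_def sumr_ge0 ?andbT => [|j _]; last exact: sqr_ge0.
apply/negP => /eqP/psumr_eq0P alpha_sqr0.
have : \sum_j alpha j = 0.
  by apply: big1 => j _; apply/eqP; rewrite -sqrf_eq0 alpha_sqr0 // => k _; exact: sqr_ge0.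
by rewrite alpha_sum => /eqP; rewrite oner_eq0.
Qed.

Definition divergence_slack (n : nat) (delta : R) : R :=
  2 * Num.sqrt (ln (2 / delta) / n%:R).

Section FixedConfidence.
Context {n : nat} {delta : R}.
Hypothesis n_gt0 : (0 < n)%N.
Hypothesis delta_gt0 : 0 < delta.
Hypothesis delta_lt1 : delta < 1.

Lemma ln_ratio_gt0 (c : R) : 1 <= c -> 0 < ln (c / delta).
Proof.
by move=> c_ge1; apply: ln_gt0; rewrite ltr_pdivlMr // mul1r (lt_le_trans delta_lt1).
Qed.

Lemma divergence_slack_gt0 : 0 < divergence_slack n delta.
Proof. by rewrite mulr_gt0 // sqrtr_gt0 divr_gt0 ?ln_ratio_gt0 ?ler1n ?ltr0n. Qed.

Lemma divergence_slack_tail :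
  expR (- (divergence_slack n delta ^+ 2 / (2 * (2 / n%:R)))) = delta / 2.
Proof.
have n_gt0R : 0 < n%:R :> R by rewrite ltr0n.
have ln2_gt0 := @ln_ratio_gt0 2 (ler1n _ 2).
rewrite /divergence_slack exprMn sqr_sqrtr ?divr_ge0 ?ltW //.
rewrite (_ : 2 ^+ 2 * (ln (2 / delta) / n%:R) / (2 * (2 / n%:R)) = ln (2 / delta)).
  by rewrite expRN lnK ?posrE ?divr_gt0 // invf_div.
by field; rewrite gt_eqF.
Qed.

Lemma divergence_slack_lt (d : nat) :
  divergence_slack n delta <
  2 * Num.sqrt ((2 * d%:R * ln (2 * n%:R) + ln (4 / delta)) / n%:R).
Proof.
have n_gt0R : 0 < n%:R :> R by rewrite ltr0n.
have ln_lt : ln (2 / delta) < ln (4 / delta).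
  by rewrite ltr_ln ?posrE ?divr_gt0 // ltr_pM2r ?invr_gt0 //; lra.
have ln2n_ge0 : 0 <= ln (2 * n%:R : R).
  apply: ln_ge0; have : 1 <= n%:R :> R by rewrite ler1n.
  lra.
have dterm_ge0 : 0 <= 2 * d%:R * ln (2 * n%:R : R) by rewrite !mulr_ge0.
rewrite /divergence_slack ltr_pM2l // ltr_sqrt; last first.
  rewrite divr_gt0 //; apply: ltr_wpDl dterm_ge0 _; exact/ln_ratio_gt0/ler1n.
by rewrite ltr_pM2r ?invr_gt0 //; lra.
Qed.

Lemma source_bound_tail (d : nat) {M : nat} {alpha : 'I_M -> R} :
  (0 < M)%N -> (M %| n)%N -> 0 < \sum_j alpha j ^+ 2 ->
  let B := 2 * Num.sqrt ((M%:R * (2 * d%:R * ln (2 * (n%:R + 1)) + ln (8 / delta)))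
                          / n%:R * \sum_j alpha j ^+ 2) in
  0 < B /\ expR (- (B ^+ 2 / (2 * ((\sum_j alpha j ^+ 2) / (n %/ M)%:R)))) <= delta / 8.
Proof.
move=> M_gt0 M_dvd_n alpha_gt0 B.
have n_gt0R : 0 < n%:R :> R by rewrite ltr0n.
have M_gt0R : 0 < M%:R :> R by rewrite ltr0n.
have m_gt0R : 0 < (n %/ M)%:R :> R by rewrite ltr0n divn_gt0 // dvdn_leq.
have nE : n%:R = (n %/ M)%:R * M%:R :> R by rewrite -natrM divnK.
set L := 2 * d%:R * ln (2 * (n%:R + 1)) + ln (8 / delta).
have ln8_gt0 := @ln_ratio_gt0 8 (ler1n _ 8).
have L_ge : ln (8 / delta) <= L.
  rewrite /L lerDr !mulr_ge0 // ln_ge0 //; have : 0 <= n%:R :> R by [].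
  lra.
have rad_gt0 : 0 < M%:R * L / n%:R * \sum_j alpha j ^+ 2.
  by rewrite !mulr_gt0 ?invr_gt0 //; lra.
split; first by rewrite mulr_gt0 // sqrtr_gt0.
have -> : B ^+ 2 / (2 * ((\sum_j alpha j ^+ 2) / (n %/ M)%:R)) = 2 * L.
  rewrite /B -/L exprMn sqr_sqrtr ?ltW // nE; field.
  by rewrite !gt_eqF.
apply: (@le_trans _ _ (expR (- ln (8 / delta)))); first by rewrite ler_expR; lra.
by rewrite expRN lnK ?posrE ?divr_gt0 // invf_div.
Qed.

End FixedConfidence.
End ConfidenceTerms.

Theorem theorem1
  (R : realType) (dX : measure_display) (X : measurableType dX)
  (H : set (X -> bool)) (d : nat) (M : nat)
  (S : 'I_M -> probability X R) (fS : 'I_M -> X -> bool)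
  (T : probability X R) (fT : X -> bool)
  (n : nat) (delta : R) (h : X -> bool) (alpha : 'I_M -> R)
  (dO : measure_display) (O : measurableType dO) (P : probability O R)
  (Xs : 'I_M -> 'I_(n %/ M) -> O -> X) (Xt Xa : 'I_n -> O -> X) :
  VCdim H d ->
  (forall g, H g -> measurable [set x | g x]) ->
  (forall j, measurable [set x | fS j x]) ->
  measurable [set x | fT x] ->
  (1 <= M)%N -> (0 < n)%N -> (M %| n)%N ->
  0 < delta < 1 ->
  H h -> simplex alpha ->
  (forall k, measurable_fun setT (all_samples Xs Xt Xa k)) ->
  mutually_independent P (all_samples Xs Xt Xa) ->
  (forall j i A, measurable A -> P (Xs j i @^-1` A) = S j A) ->
  (forall i A, measurable A -> P (Xt i @^-1` A) = T A) ->
  (forall i A, measurable A -> P (Xa i @^-1` A) = mixture alpha S A) ->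
  let B := 2 * Num.sqrt ((M%:R * (2 * d%:R * ln (2 * (n%:R + 1)) + ln (8 / delta)))
                          / n%:R * \sum_(j < M) alpha j ^+ 2) in
  let lambda := inf [set (\sum_(j < M) alpha j * risk (S j) (fS j) h') + risk T fT h'
                     | h' in H] in
  let V := 2 * Num.sqrt ((2 * d%:R * ln (2 * n%:R) + ln (4 / delta)) / n%:R) in
  exists E : set O, measurable E /\ (P E >= (1 - delta)%:E)%E /\
    forall w, E w ->
      risk T fT h <=
        (\sum_(j < M) alpha j * emp_risk (fun i => Xs j i w) (fS j) h)
        + 1 / 2 * emp_div (symdiff_class H) (fun i => Xa i w) (fun i => Xt i w)
        + lambda + B + V.
Proof.
move=> _ mH mfS mfT M_gt0 n_gt0 M_dvd_n /andP[delta_gt0 delta_lt1] Hh [alpha_ge0 alpha_sum]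
  mZ indep lawS lawT lawA B lambda V.
have m_gt0 : (0 < n %/ M)%N by rewrite divn_gt0 // dvdn_leq.
have alpha_sqr_gt0 := sum_sqr_gt0_of_sum1 alpha_sum.
have [B_gt0 B_tail] := source_bound_tail n_gt0 delta_gt0 delta_lt1 d M_gt0 M_dvd_n alpha_sqr_gt0.
set t := divergence_slack n delta.
have t_lt_V : t < V := divergence_slack_lt n_gt0 delta_gt0 delta_lt1 d.
(* a comparator h' whose joint risk is within V - t of lambda *)
have joint_ge0 h'' : H h'' -> 0 <= \sum_j alpha j * risk (S j) (fS j) h'' + risk T fT h''.
  by move=> _; rewrite addr_ge0 ?risk_ge0 // sumr_ge0 // => j _; rewrite mulr_ge0 ?risk_ge0.
have eta_gt0 : 0 < V - t by rewrite subr_gt0.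
have [h' Hh' h'_opt] := inf_near_attained Hh joint_ge0 eta_gt0.
have mErr j : measurable [set x | h x != fS j x] by exact: measurable_neq (mH _ Hh) (mfS j).
have [E [mE PE small]] := small_gaps_event P M n S fS T alpha Xs Xt Xa m_gt0 n_gt0 mZ indep
  lawS lawT lawA h (disagreement h h') mErr (measurable_disagreement (mH _ Hh) (mH _ Hh')) B t B_gt0
  (divergence_slack_gt0 n_gt0 delta_gt0 delta_lt1) alpha_sqr_gt0.
exists E; split=> //; split.
  apply: le_trans PE; rewrite lee_fin (divergence_slack_tail n_gt0 delta_gt0 delta_lt1); lra.
move=> w /small[src_gap div_gap].
have /ler_normlP[freq_gap _] := emp_freq_gap_le_div (R := R) (fun i => Xa i w)
  (fun i => Xt i w) n_gt0 (disagreement_symdiff Hh Hh').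
have := risk_transfer alpha S fS T fT h h' alpha_ge0 (mH _ Hh) (mH _ Hh') mfS mfT.
rewrite /source_gap /divergence_gap in src_gap div_gap.
lra.
Qed.
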